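(* Let $A,B\subseteq\mathbb{N}$ with $A\in\mathcal{D}$ and $A\cap B=\emptyset$. Then $\underline{\underline{d}}(A\cup B)=d(A)+\underline{\underline{d}}(B)$.
   Context: $\mathbb{N}=\{1,2,3,\dots\}$. For $A\subseteq\mathbb{N}$ let $A(n)=|A\cap[1,n]|$. Let $\mathcal{D}$ be the collection of all $A\subseteq\mathbb{N}$ for which the asymptotic density $d(A)=\lim_{n\to\infty}\frac{A(n)}{n}$ exists. Define $\underline{\underline{d}}(A)=\sup\{d(B);\ B\subseteq A,\ B\in\mathcal{D}\}$. *)

(* reals R with Coquelicot limits. Subsets of N = {1,2,...} are
   predicates on nat; only elements in [1,n] are counted, so the value at 0 is irrelevant. *)
From Stdlib Require Import Reals ClassicalEpsilon.
From Coquelicot Require Import Coquelicot.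
Open Scope R_scope.

Definition nset := nat -> Prop.

Definition ind (A : nset) (k : nat) : R :=
  if excluded_middle_informative (A k) then 1 else 0.

Fixpoint count (A : nset) (n : nat) : R :=
  match n with
  | O => 0
  | S m => count A m + ind A (S m)
  end.

Definition has_density (A : nset) (d : R) : Prop :=
  is_lim_seq (fun n => count A n / INR n) d.

Definition in_D (A : nset) : Prop := exists d, has_density A d.

(* d(A) (meaningful when A ∈ 𝒟) *)
Definition dens (A : nset) : R := real (Lim_seq (fun n => count A n / INR n)).

Definition subset (B A : nset) : Prop := forall k, B k -> A k.

(* lower-lower density: sup { d(B) : B ⊆ A, B ∈ 𝒟 } (the set is nonempty, contains 0,
   and is bounded by 1, so the supremum is a finite real) *)
Definition ddl (A : nset) : R :=
  real (Lub_Rbar (fun x => exists B, subset B A /\ has_density B x)).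

From Stdlib Require Import Arith Reals Lra Lia ClassicalEpsilon.
From Coquelicot Require Import Coquelicot.
Open Scope R_scope.

(* If C ⊆ B has density x, then A ∪ C ⊆ A ∪ B has density d(A) + x; this gives
   "≥". Conversely, let C ⊆ A ∪ B have density c > d(A) =: a. On every interval
   (m, n] the set C \ A ⊆ B gains at least (c - a)(n - m) - o(n) elements. Pick
   the elements of C \ A greedily, taking one only while the running count stays
   below (c - a) n. The count of the picked set never exceeds (c - a) n, and
   since the last rejection it has grown as fast as C \ A, so it is within
   o(n) of (c - a) n: a subset of B of density c - a, which gives "≤". *)

Lemma ind_bounds (X : nset) (k : nat) : 0 <= ind X k <= 1.
Proof. unfold ind; destruct (excluded_middle_informative _); lra. Qed.

Lemma count_bounds (X : nset) (n : nat) : 0 <= count X n <= INR n.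
Proof.
  induction n as [|n IHn]; simpl count; [simpl; lra|].
  rewrite S_INR; pose proof (ind_bounds X (S n)); lra.
Qed.

Lemma count_ratio_bounds (X : nset) (n : nat) : 0 <= count X n / INR n <= 1.
Proof.
  destruct n as [|n]; [simpl; unfold Rdiv; rewrite Rmult_0_l; lra|].
  pose proof (count_bounds X (S n)); pose proof (lt_0_INR (S n) ltac:(lia)).
  split; [apply Rdiv_le_0_compat; lra|].
  apply Rle_div_l; lra.
Qed.

Lemma has_density_bounds (X : nset) (x : R) : has_density X x -> 0 <= x <= 1.
Proof.
  intros HX; split.
  - apply (is_lim_seq_le (fun _ => 0) (fun n => count X n / INR n) 0 x);
      [apply count_ratio_bounds | apply is_lim_seq_const | exact HX].
  - apply (is_lim_seq_le (fun n => count X n / INR n) (fun _ => 1) x 1);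
      [apply count_ratio_bounds | exact HX | apply is_lim_seq_const].
Qed.

Lemma has_density_empty : has_density (fun _ => False) 0.
Proof.
  assert (Hcount : forall n, count (fun _ => False) n = 0).
  { induction n as [|n IHn]; simpl; [reflexivity|].
    rewrite IHn; unfold ind; destruct (excluded_middle_informative False); [contradiction|lra]. }
  apply (is_lim_seq_ext (fun _ => 0)); [|apply is_lim_seq_const].
  intros n; rewrite Hcount; unfold Rdiv; ring.
Qed.

Lemma count_disjoint_union (X Y : nset) (n : nat) :
  (forall k, X k -> Y k -> False) ->
  count (fun k => X k \/ Y k) n = count X n + count Y n.
Proof.
  intros Hdisj; induction n as [|n IHn]; simpl; [lra|].
  rewrite IHn; unfold ind.
  destruct (excluded_middle_informative (X (S n) \/ Y (S n))) as [[HX|HY]|HXY];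
  destruct (excluded_middle_informative (X (S n)));
  destruct (excluded_middle_informative (Y (S n))); try tauto; try lra; exfalso; eauto.
Qed.

Lemma has_density_disjoint_union (X Y : nset) (x y : R) :
  (forall k, X k -> Y k -> False) ->
  has_density X x -> has_density Y y -> has_density (fun k => X k \/ Y k) (x + y).
Proof.
  intros Hdisj HX HY.
  apply (is_lim_seq_ext (fun n => count X n / INR n + count Y n / INR n)).
  - intros n; rewrite count_disjoint_union by exact Hdisj; unfold Rdiv; ring.
  - apply is_lim_seq_plus'; assumption.
Qed.

Definition subset_densities (X : nset) (x : R) : Prop :=
  exists B, subset B X /\ has_density B x.

Lemma subset_densities_0 (X : nset) : subset_densities X 0.
Proof. exists (fun _ => False); split; [intros k [] | exact has_density_empty]. Qed.

Lemma Lub_subset_densities (X : nset) : Lub_Rbar (subset_densities X) = Finite (ddl X).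
Proof.
  unfold ddl; fold (subset_densities X).
  destruct (Lub_Rbar_correct (subset_densities X)) as [Hub Hlub].
  pose proof (Hub 0 (subset_densities_0 X)) as Hge0.
  assert (Hle1 : Rbar_le (Lub_Rbar (subset_densities X)) 1).
  { apply Hlub; intros x [C [_ HC]]; exact (proj2 (has_density_bounds C x HC)). }
  destruct (Lub_Rbar (subset_densities X)); simpl in *; easy.
Qed.

Lemma ddl_upper_bound (X : nset) (x : R) : subset_densities X x -> x <= ddl X.
Proof.
  intros Hx; destruct (Lub_Rbar_correct (subset_densities X)) as [Hub _].
  specialize (Hub x Hx); rewrite Lub_subset_densities in Hub; exact Hub.
Qed.

Lemma ddl_least_upper_bound (X : nset) (M : R) :
  (forall x, subset_densities X x -> x <= M) -> ddl X <= M.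
Proof.
  intros HM; destruct (Lub_Rbar_correct (subset_densities X)) as [_ Hlub].
  assert (HleM : Rbar_le (Lub_Rbar (subset_densities X)) M) by (apply Hlub; exact HM).
  rewrite Lub_subset_densities in HleM; exact HleM.
Qed.

Lemma ddl_ge0 (X : nset) : 0 <= ddl X.
Proof. apply ddl_upper_bound, subset_densities_0. Qed.

(* The error A(m) - c m is o(n) uniformly in m <= n: small m are handled by
   the trivial bound |A(m) - c m| <= m. *)
Lemma has_density_uniform (X : nset) (c : R) : has_density X c ->
  forall eps, 0 < eps -> exists N, forall n m, (N <= n)%nat -> (m <= n)%nat ->
    Rabs (count X m - c * INR m) <= eps * INR n.
Proof.
  intros HX eps Heps.
  pose proof (has_density_bounds X c HX) as Hc.
  destruct (proj1 (is_lim_seq_Reals _ c) HX eps Heps) as [N1 HN1].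
  destruct (INR_archimed eps (INR N1) Heps) as [N2 HN2].
  exists (N1 + N2)%nat; intros n m Hn Hm.
  assert (Hmn : INR m <= INR n) by (apply le_INR; lia).
  assert (HN2n : INR N2 <= INR n) by (apply le_INR; lia).
  destruct (le_lt_dec (S N1) m) as [Hbig|Hsmall].
  - assert (Hm0 : 0 < INR m) by (apply lt_0_INR; lia).
    specialize (HN1 m ltac:(lia)); unfold R_dist in HN1.
    replace (count X m - c * INR m) with (INR m * (count X m / INR m - c)) by (field; lra).
    rewrite Rabs_mult, (Rabs_pos_eq (INR m)) by lra.
    pose proof (Rabs_pos (count X m / INR m - c)); nra.
  - assert (HmN1 : INR m <= INR N1) by (apply le_INR; lia).
    pose proof (count_bounds X m).
    assert (0 <= c * INR m <= INR m) by nra.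
    apply Rabs_le; nra.
Qed.

Lemma count_setminus_increment (C A : nset) (m n : nat) : (m <= n)%nat ->
  (count C n - count C m) - (count A n - count A m)
  <= count (fun k => C k /\ ~ A k) n - count (fun k => C k /\ ~ A k) m.
Proof.
  induction 1 as [|n _ IHn]; [lra|].
  simpl count; unfold ind.
  destruct (excluded_middle_informative (C (S n) /\ ~ A (S n)));
  destruct (excluded_middle_informative (C (S n)));
  destruct (excluded_middle_informative (A (S n))); try tauto; lra.
Qed.

Definition uniform_lower_growth (D : nset) (t : R) : Prop :=
  forall eps, 0 < eps -> exists N, forall n m, (N <= n)%nat -> (m <= n)%nat ->
    t * (INR n - INR m) - eps * INR n <= count D n - count D m.

Lemma setminus_uniform_lower_growth (C A : nset) (c a : R) :
  has_density C c -> has_density A a ->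
  uniform_lower_growth (fun k => C k /\ ~ A k) (c - a).
Proof.
  intros HC HA eps Heps.
  destruct (has_density_uniform C c HC (eps / 4) ltac:(lra)) as [N1 HN1].
  destruct (has_density_uniform A a HA (eps / 4) ltac:(lra)) as [N2 HN2].
  exists (N1 + N2)%nat; intros n m Hn Hm.
  pose proof (count_setminus_increment C A m n Hm).
  pose proof (proj1 (Rabs_le_between' _ _ _) (HN1 n m ltac:(lia) Hm)).
  pose proof (proj1 (Rabs_le_between' _ _ _) (HN1 n n ltac:(lia) (le_n n))).
  pose proof (proj1 (Rabs_le_between' _ _ _) (HN2 n m ltac:(lia) Hm)).
  pose proof (proj1 (Rabs_le_between' _ _ _) (HN2 n n ltac:(lia) (le_n n))).
  lra.
Qed.

Fixpoint greedy_count (D : nset) (t : R) (n : nat) : R :=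
  match n with
  | O => 0
  | S j => greedy_count D t j +
      if excluded_middle_informative (D (S j) /\ greedy_count D t j + 1 <= t * INR (S j))
      then 1 else 0
  end.

Definition greedy (D : nset) (t : R) : nset := fun k =>
  match k with
  | O => False
  | S j => D (S j) /\ greedy_count D t j + 1 <= t * INR (S j)
  end.

Lemma count_greedy (D : nset) (t : R) (n : nat) : count (greedy D t) n = greedy_count D t n.
Proof. induction n as [|n IHn]; simpl; [reflexivity|]; rewrite IHn; reflexivity. Qed.

Lemma greedy_subset (D : nset) (t : R) : subset (greedy D t) D.
Proof. intros [|k] Hk; [contradiction | exact (proj1 Hk)]. Qed.

Lemma greedy_count_le (D : nset) (t : R) (n : nat) : 0 <= t -> greedy_count D t n <= t * INR n.
Proof.
  intros Ht; induction n as [|n IHn]; [simpl; lra|]; cbn [greedy_count].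
  destruct (excluded_middle_informative _) as [[_ Hle]|_]; [lra|].
  rewrite S_INR; nra.
Qed.

(* m is the last index <= n at which an element of D was rejected (or 0). *)
Lemma greedy_count_catches_up (D : nset) (t : R) (n : nat) : exists m, (m <= n)%nat /\
  t * INR m - 1 + (count D n - count D m) <= greedy_count D t n.
Proof.
  induction n as [|n [m [Hm IHn]]]; [exists 0%nat; simpl; split; [lia|lra]|].
  cbn [count greedy_count]; unfold ind.
  destruct (excluded_middle_informative (D (S n) /\ greedy_count D t n + 1 <= t * INR (S n)))
    as [Htaken|Hskipped];
  destruct (excluded_middle_informative (D (S n))) as [HD|HnD].
  - exists m; split; [lia|lra].
  - tauto.
  - exists (S n); split; [lia|].
    assert (greedy_count D t n + 1 > t * INR (S n)) by (apply Rnot_le_gt; tauto).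
    cbn [count]; unfold ind; destruct (excluded_middle_informative (D (S n))); [lra|tauto].
  - exists m; split; [lia|lra].
Qed.

Lemma greedy_density (D : nset) (t : R) :
  0 <= t -> uniform_lower_growth D t -> has_density (greedy D t) t.
Proof.
  intros Ht HD; apply is_lim_seq_Reals; intros eps Heps.
  destruct (HD (eps / 2) ltac:(lra)) as [N1 HN1].
  destruct (INR_archimed eps 2 Heps) as [N2 HN2].
  exists (S (N1 + N2)); intros n Hn; unfold R_dist.
  assert (Hn0 : 0 < INR n) by (apply lt_0_INR; lia).
  assert (Hepsn : 2 < eps * INR n) by (assert (INR N2 <= INR n) by (apply le_INR; lia); nra).
  rewrite count_greedy.
  pose proof (greedy_count_le D t n Ht) as Hupper.
  destruct (greedy_count_catches_up D t n) as [m [Hm Hlower]].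
  specialize (HN1 n m ltac:(lia) Hm).
  replace (greedy_count D t n / INR n - t) with ((greedy_count D t n - t * INR n) / INR n)
    by (field; lra).
  rewrite Rabs_div, (Rabs_pos_eq (INR n)) by lra.
  apply Rlt_div_l; [lra|].
  apply Rle_lt_trans with (1 + eps / 2 * INR n); [apply Rabs_le|]; lra.
Qed.

Theorem lemma3p9 (A B : nset) :
  in_D A ->
  (forall k, A k -> B k -> False) ->
  ddl (fun k => A k \/ B k) = dens A + ddl B.
Proof.
  intros [a HA] Hdisj.
  assert (dens A = a) as ->
    by (unfold dens; rewrite (is_lim_seq_unique _ _ HA); reflexivity).
  apply Rle_antisym.
  - apply ddl_least_upper_bound; intros c [C [HCsub HC]].
    destruct (Rle_lt_dec c a) as [Hca|Hac]; [pose proof (ddl_ge0 B); lra|].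
    enough (c - a <= ddl B) by lra.
    apply ddl_upper_bound; exists (greedy (fun k => C k /\ ~ A k) (c - a)); split.
    + intros k Hk; destruct (greedy_subset _ _ k Hk) as [HCk HnA].
      destruct (HCsub k HCk); tauto.
    + apply greedy_density; [lra|].
      apply setminus_uniform_lower_growth; assumption.
  - enough (ddl B <= ddl (fun k => A k \/ B k) - a) by lra.
    apply ddl_least_upper_bound; intros x [C [HCsub HC]].
    enough (a + x <= ddl (fun k => A k \/ B k)) by lra.
    apply ddl_upper_bound; exists (fun k => A k \/ C k); split.
    + intros k [Hk|Hk]; auto.
    + apply has_density_disjoint_union; eauto.
Qed.
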